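(* Let $\mathcal{G}$ be a network of type $\mathcal{C}^1$ with exactly two stubborn agents $s_1,s_2$, whose opinions evolve by the Friedkin–Johnsen model $\mathbf{x}(k+1)=(I-\beta)W\mathbf{x}(k)+\beta\mathbf{x}(0)$, let $m$ be a global communicator, and let $\mathcal{T}_1,\dots,\mathcal{T}_4$ be defined relative to $m$. Let $(a,b,d)$ be a permissible non-redundant edge modification. (A) The modification increases the influence centrality $c_{s_1}$ if either C1: $a$ satisfies (i) $a\in\mathcal{T}_1$ and (ii) every simple path from $m$ to $a$ passes through $s_1$, while $d$ fails (i) or (ii) (or both) (i.e. $d\notin\mathcal{T}_1$, or some simple path from $m$ to $d$ avoids $s_1$); or C2: $a\in\mathcal{T}_4$ and $d\in\mathcal{T}_2$. (B) Symmetrically, the modification increases $c_{s_2}$ if either C1: $a\in\mathcal{T}_2$ and every simple path from $m$ to $a$ passes through $s_2$, while $d$ fails at least one of these two conditions (with $s_2,\mathcal{T}_2$ in place of $s_1,\mathcal{T}_1$); or C2: $a\in\mathcal{T}_4$ and $d\in\mathcal{T}_1$.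
   Context: Let $\mathcal{G}=(\mathcal{V},\mathcal{E})$, $\mathcal{V}=\{1,\dots,n\}$, be a directed graph, where an edge $(i,j)$ means information flows from $i$ to $j$. Its weighted adjacency matrix $W=[w_{ij}]$ is row-stochastic with $w_{ij}>0$ iff $(j,i)\in\mathcal{E}$ (self-loops allowed). In the Friedkin–Johnsen model, $\beta=\mathrm{diag}(\beta_1,\dots,\beta_n)$ with $\beta_i\in[0,1]$, and agent $i$ is stubborn if $\beta_i>0$. Here exactly two agents $s_1,s_2$ are stubborn, with $\beta_{s_1},\beta_{s_2}\in(0,1)$. The influence centrality vector is $\mathbf{c}=P^T\mathbb{1}_n/n$ with $P=(I_n-(I_n-\beta)W)^{-1}\beta$; $c_i$ is the influence centrality of agent $i$ (and $c_{s_1}+c_{s_2}=1$). ''Increases the influence centrality of $s_i$'' means $c_{s_i}$ is strictly larger after the modification. Type $\mathcal{C}^1$: $\mathcal{G}$ is strongly connected and some node $m$ belongs to every cycle of $\mathcal{G}$ other than self-loops; such an $m$ is a global communicator. Given a global communicator $m$, a direct path from $i$ to $j$ is a path from $i$ to $j$ that does not pass through $m$. The nodes are classified as: $\mathcal{T}_1$: nodes having a direct path from $s_1$ but not from $s_2$; $\mathcal{T}_2$: direct path from $s_2$ but not from $s_1$; $\mathcal{T}_3$: direct paths from both; $\mathcal{T}_4$: from neither. By convention $s_1\in\mathcal{T}_1$, $s_2\in\mathcal{T}_2$, $m\in\mathcal{T}_3$, except that if $s_1$ has a direct path to $s_2$ then $s_2$ and every node with a direct path from $s_2$ belong to $\mathcal{T}_3$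 (so $\mathcal{T}_2=\emptyset$). Edge modification $(a,b,d)$: for distinct nodes $a,b,d$ with $w_{bd}>0$ and some $0<w<w_{bd}$, replace $w_{ba}$ by $w_{ba}+w$ (adding edge $(a,b)$ if absent) and $w_{bd}$ by $w_{bd}-w$, so the in-degree (row sum) of $b$ is unchanged. It is permissible if the modified network is still of type $\mathcal{C}^1$. It is redundant if it changes the influence centrality of neither stubborn agent, and non-redundant otherwise. *)

From mathcomp Require Import all_boot all_order all_algebra.
Set Implicit Arguments. Unset Strict Implicit. Unset Printing Implicit Defensive.
Import Order.TTheory GRing.Theory Num.Theory.
Local Open Scope ring_scope.

Section FJ.
Variables (R : realFieldType) (n : nat).
Implicit Types (W : 'M[R]_n) (i j u v m s x : 'I_n).

(* edge (u,v) : information flows from u to v, i.e. w_vu > 0 *)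
Definition edge W : rel 'I_n := fun u v => 0 < W v u.

Definition row_stochastic W : Prop :=
  (forall i j, 0 <= W i j) /\ (forall i, \sum_(j < n) W i j = 1).

Definition strongly_connected W : Prop :=
  forall u v, exists p : seq 'I_n, path (edge W) u p /\ last u p = v.

(* a cycle other than a self-loop: a closed path through >= 2 distinct nodes *)
Definition is_cycle W (c : seq 'I_n) : Prop :=
  (2 <= size c)%N /\ uniq c /\ cycle (edge W) c.

Definition global_communicator W m : Prop :=
  forall c, is_cycle W c -> m \in c.

Definition type_C1 W : Prop :=
  strongly_connected W /\ exists m, global_communicator W m.

(* simple path from u to v, given as u :: p *)
Definition simple_path W u (p : seq 'I_n) v : Prop :=
  path (edge W) u p /\ last u p = v /\ uniq (u :: p).

Definition direct_path W m s j : Prop :=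
  exists p, simple_path W s p j /\ m \notin s :: p.

Definition all_paths_through W m x s : Prop :=
  forall p, simple_path W m p x -> s \in m :: p.

Definition base_class W m s1 s2 (k : nat) j : Prop :=
  match k with
  | 1 => direct_path W m s1 j /\ ~ direct_path W m s2 j
  | 2 => ~ direct_path W m s1 j /\ direct_path W m s2 j
  | 3 => direct_path W m s1 j /\ direct_path W m s2 j
  | 4 => ~ direct_path W m s1 j /\ ~ direct_path W m s2 j
  | _ => False
  end%N.

Definition inT W m s1 s2 (k : nat) j : Prop :=
  if j == s1 then k = 1%N
  else if j == s2 then
    (direct_path W m s1 s2 -> k = 3%N) /\ (~ direct_path W m s1 s2 -> k = 2%N)
  else if j == m then k = 3%N
  else base_class W m s1 s2 k j.

Definition beta_mx (beta : 'I_n -> R) : 'M[R]_n := diag_mx (\row_i beta i).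

Definition FJ_P W (beta : 'I_n -> R) : 'M[R]_n :=
  invmx (1%:M - (1%:M - beta_mx beta) *m W) *m beta_mx beta.

Definition influence_centrality W (beta : 'I_n -> R) (i : 'I_n) : R :=
  (\sum_(j < n) FJ_P W beta j i) / n%:R.

Definition modify W (a b d : 'I_n) (w : R) : 'M[R]_n :=
  \matrix_(i, j) (if i == b then
                    (if j == a then W i j + w
                     else if j == d then W i j - w else W i j)
                  else W i j).

End FJ.

(* For a stubborn agent s, the column x = P e_s of the Friedkin-Johnsen matrix
   solves x_i - (1 - beta_i) sum_k w_ik x_k = beta_i [i = s], so off the two
   stubborn agents x is harmonic and obeys a discrete minimum principle.
   Moving weight w in row b from d to a changes x by a vector solving the same
   equation on the new network with the single source (1 - beta_b) w (x_a - x_d)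
   at b; hence c_s increases when x_a > x_d and is unchanged when x_a = x_d,
   which non-redundancy rules out because the two columns sum to 1.
   It remains to see x_d <= x_a: x is largest at s and smallest at s', it is at
   least x_s on agents dominated by s from m that s' cannot reach directly
   (case C1: x_d <= x_s <= x_a), and x_m separates the agents with no direct
   path from s (below) from those with no direct path from either stubborn
   agent (above; case C2). *)

From mathcomp Require Import all_boot all_order all_algebra.
From mathcomp Require Import ring boolp.
Set Implicit Arguments. Unset Strict Implicit. Unset Printing Implicit Defensive.
Import Order.TTheory GRing.Theory Num.Theory.
Local Open Scope ring_scope.

Lemma path_closed_back (T : Type) (e : rel T) (S : T -> Prop) :
  (forall u y, e u y -> S y -> S u) ->
  forall u p, path e u p -> S (last u p) -> S u.
Proof.
move=> closedS u p; elim: p u => [|y p IHp] u //= /andP[e_uy py] Sp.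
exact: closedS e_uy (IHp y py Sp).
Qed.

Section Averages.
Variables (R : realFieldType) (n : nat) (W : 'M[R]_n).
Implicit Types (x : 'I_n -> R).

Definition avg (x : 'I_n -> R) i := \sum_k W i k * x k.

Lemma avgB (x y : 'I_n -> R) i : avg (fun k => x k - y k) i = avg x i - avg y i.
Proof. by rewrite /avg -sumrB; apply: eq_bigr => k _; rewrite mulrBr. Qed.

Lemma avgN x i : avg (fun k => - x k) i = - avg x i.
Proof. by rewrite /avg -sumrN; apply: eq_bigr => k _; rewrite mulrN. Qed.

Hypothesis W_sum1 : forall i, \sum_j W i j = 1.

Lemma avg_cst K i : avg (fun=> K) i = K.
Proof. by rewrite /avg -mulr_suml W_sum1 mul1r. Qed.

Hypothesis W_ge0 : forall i j, 0 <= W i j.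

Lemma avg_sub_ge0 x mu i : (forall k, 0 < W i k -> mu <= x k) ->
  forall k, 0 <= W i k * (x k - mu).
Proof.
move=> x_ge k; have := W_ge0 i k; rewrite le0r => /orP[/eqP->|W_ik].
  by rewrite mul0r.
by rewrite mulr_ge0 ?W_ge0 // subr_ge0 x_ge.
Qed.

Lemma avg_ge x mu i : (forall k, 0 < W i k -> mu <= x k) -> mu <= avg x i.
Proof.
move=> x_ge; rewrite -subr_ge0 -[X in _ - X](avg_cst mu i) -avgB.
by apply: sumr_ge0 => k _; apply: avg_sub_ge0.
Qed.

Lemma avg_le_lb x mu i : (forall k, 0 < W i k -> mu <= x k) -> avg x i <= mu ->
  forall k, 0 < W i k -> x k = mu.
Proof.
move=> x_ge avg_le k W_ik.
have sum0 : \sum_k W i k * (x k - mu) = 0.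
  apply/eqP; rewrite eq_le sumr_ge0 ?andbT => [|k' _]; last exact: avg_sub_ge0.
  by rewrite -/(avg _ i) avgB avg_cst subr_le0.
have /eqP := @psumr_eq0P _ _ _ _ (fun k' _ => avg_sub_ge0 x_ge k') sum0 k isT.
by rewrite mulf_eq0 gt_eqF //= subr_eq0 => /eqP.
Qed.

(* A negative minimum over Q would spread backwards along every edge, hence
   (by strong connectivity) to r, where c r < 1 forbids it. *)
Lemma min_principle (c x : 'I_n -> R) (Q : pred 'I_n) r :
  strongly_connected W ->
  (forall i, Q i -> 0 <= c i <= 1) ->
  (forall i, Q i -> c i * avg x i <= x i) ->
  (forall i k, Q i -> 0 < W i k -> Q k \/ 0 <= x k) ->
  (Q r -> c r < 1) ->
  forall i, Q i -> 0 <= x i.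
Proof.
move=> W_sc c01 super out c_r i0 Q_i0; rewrite leNgt; apply/negP => x_i0.
have [j Q_j j_min] := arg_minP x Q_i0.
set mu := x j in j_min.
have mu_lt0 : mu < 0 := le_lt_trans (j_min _ Q_i0) x_i0.
have spread y : Q y -> x y = mu ->
    c y = 1 /\ forall k, 0 < W y k -> Q k /\ x k = mu.
  move=> Q_y x_y.
  have ge_mu k : 0 < W y k -> mu <= x k.
    move=> W_yk; have [/j_min //|x_k] := out y k Q_y W_yk.
    exact: le_trans (ltW mu_lt0) x_k.
  have [c_ge0 c_le1] := andP (c01 y Q_y).
  have c_y : c y = 1.
    apply/eqP; rewrite eq_le c_le1 -(ler_nM2r mu_lt0) mul1r.
    by rewrite -{2}x_y (le_trans _ (super y Q_y)) // ler_wpM2l // avg_ge.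
  split=> // k W_yk.
  have avg_le : avg x y <= mu by have := super y Q_y; rewrite c_y mul1r x_y.
  have x_k := avg_le_lb ge_mu avg_le W_yk.
  split=> //; have [//|] := out y k Q_y W_yk.
  by rewrite x_k leNgt mu_lt0.
have [p [path_rj last_j]] := W_sc r j.
have [Q_r x_r] : Q r /\ x r = mu.
  apply: (path_closed_back (S := fun u => Q u /\ x u = mu)) path_rj _.
    by move=> u y W_yu [Q_y x_y]; apply: (spread y Q_y x_y).2.
  by rewrite last_j.
by have := c_r Q_r; rewrite (spread r Q_r x_r).1 ltxx.
Qed.

End Averages.

Section FJEquation.
Variables (R : realFieldType) (n : nat) (W : 'M[R]_n) (beta : 'I_n -> R).
Implicit Types (f g x y : 'I_n -> R).

Definition fj_solves (f x : 'I_n -> R) :=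
  forall i, x i - (1 - beta i) * avg W x i = f i.

Lemma fj_solvesB f g x y : fj_solves f x -> fj_solves g y ->
  fj_solves (fun i => f i - g i) (fun i => x i - y i).
Proof. by move=> fx gy i; rewrite avgB -fx -gy; ring. Qed.

Lemma fj_mxE p (X : 'M[R]_(n, p)) i j :
  ((1%:M - (1%:M - beta_mx beta) *m W) *m X) i j =
  X i j - (1 - beta i) * avg W (fun k => X k j) i.
Proof.
rewrite mulmxBl mul1mx -mulmxA mulmxBl mul1mx /beta_mx mul_diag_mx.
by rewrite !mxE mulrBl mul1r.
Qed.

Lemma fj_solves0 : fj_solves (fun=> 0) (fun=> 0).
Proof. by move=> i; rewrite /avg big1 ?mulr0 ?subr0 // => k _; rewrite mulr0. Qed.

Definition fj_weight s i := FJ_P W beta i s.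

Hypotheses (W_ge0 : forall i j, 0 <= W i j) (W_sum1 : forall i, \sum_j W i j = 1)
  (W_sc : strongly_connected W) (beta01 : forall i, 0 <= beta i <= 1).
Variable r : 'I_n.
Hypothesis beta_r : 0 < beta r.

Lemma fj_solves_ge0 f x : (forall i, 0 <= f i) -> fj_solves f x ->
  forall i, 0 <= x i.
Proof.
move=> f_ge0 fx i.
apply: (min_principle W_sum1 W_ge0 (c := fun i => 1 - beta i) (Q := predT) (r := r))
  => //.
- move=> k _; have /andP[b0 b1] := beta01 k.
  by rewrite subr_ge0 b1 lerBlDr lerDl b0.
- by move=> k _; rewrite -subr_ge0 fx.
- by move=> ? ? _ _; left.
- by rewrite ltrBlDr ltrDl.
Qed.

Lemma fj_solves_inj f x y : fj_solves f x -> fj_solves f y -> x =1 y.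
Proof.
move=> fx fy i; have f0 k : 0 <= f k - f k by rewrite subrr.
apply/eqP; rewrite eq_le -subr_ge0 (fj_solves_ge0 f0 (fj_solvesB fy fx)) /=.
by rewrite -subr_ge0 (fj_solves_ge0 f0 (fj_solvesB fx fy)).
Qed.

Lemma fj_solves_sum_gt0 f x b : (forall i, 0 <= f i) -> 0 < f b ->
  fj_solves f x -> 0 < \sum_i x i.
Proof.
move=> f_ge0 f_b fx; have x_ge0 := fj_solves_ge0 f_ge0 fx.
have x_b : f b <= x b.
  rewrite -(fx b) lerBlDr lerDl mulr_ge0 ?sumr_ge0 // => [|k _].
    by have /andP[_ b1] := beta01 b; rewrite subr_ge0.
  by rewrite mulr_ge0.
rewrite (bigD1 b) //= ltr_pwDl ?sumr_ge0 //.
exact: lt_le_trans x_b.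
Qed.

Lemma fj_mx_unit : 1%:M - (1%:M - beta_mx beta) *m W \in unitmx.
Proof.
rewrite -unitmx_tr -row_free_unit -kermx_eq0; apply/eqP/row_matrixP => i.
set v := row i _; have v_ker : v *m (1%:M - (1%:M - beta_mx beta) *m W)^T = 0.
  by rewrite /v -row_mul mulmx_ker row0.
have Mv : (1%:M - (1%:M - beta_mx beta) *m W) *m v^T = 0.
  by apply: trmx_inj; rewrite trmx_mul trmxK v_ker trmx0.
have v0 : fj_solves (fun=> 0) (fun k => v^T k 0).
  by move=> k; rewrite -fj_mxE Mv mxE.
by apply/rowP => k; have := fj_solves_inj v0 fj_solves0 k; rewrite !mxE.
Qed.

Lemma fj_weight_solves s : fj_solves (fun i => beta i *+ (i == s)) (fj_weight s).
Proof.
move=> i; rewrite -fj_mxE /fj_weight /FJ_P mulmxA mulmxV ?fj_mx_unit //.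
by rewrite mul1mx /beta_mx !mxE.
Qed.

Lemma fj_weight_compl s s' : s != s' ->
  (forall i, i != s -> i != s' -> beta i = 0) ->
  fj_weight s =1 (fun i => 1 - fj_weight s' i).
Proof.
move=> ss' beta0; apply: fj_solves_inj (fj_weight_solves s) _ => i.
have one : fj_solves beta (fun=> 1) by move=> k; rewrite avg_cst // mulr1 subKr.
rewrite (fj_solvesB one (fj_weight_solves s') i).
have [->|i_s] := eqVneq i s; first by rewrite (negbTE ss') subr0.
have [->|i_s'] := eqVneq i s'; first by rewrite mulr1n mulr0n subrr.
by rewrite beta0 // mul0rn subr0.
Qed.

End FJEquation.

Section EdgeModification.
Variables (R : realFieldType) (n : nat) (W : 'M[R]_n) (a b d : 'I_n) (w : R).
Implicit Types (f x : 'I_n -> R).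
Hypothesis ad : a != d.
Local Notation W' := (modify W a b d w).

Lemma avg_modify x i :
  avg W' x i = avg W x i + (i == b)%:R * (w * (x a - x d)).
Proof.
have [->|ib] := eqVneq i b; last first.
  by rewrite mul0r addr0; apply: eq_bigr => k _; rewrite mxE (negbTE ib).
have -> : avg W' x b = \sum_k (W b k * x k
    + ((if k == a then w * x k else 0) - (if k == d then w * x k else 0))).
  apply: eq_bigr => k _; rewrite mxE eqxx.
  have [->|ka] := eqVneq k a; first by rewrite (negbTE ad) mulrDl subr0.
  by have [->|kd] := eqVneq k d; rewrite ?mulrBl ?sub0r ?subr0 ?addr0.
by rewrite big_split /= sumrB -!big_mkcond !big_pred1_eq mul1r mulrBr.
Qed.

Lemma row_stochastic_modify : row_stochastic W -> 0 <= w <= W b d ->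
  row_stochastic W'.
Proof.
move=> [W_ge0 W_sum1] /andP[w_ge0 w_le]; split=> [i j|i].
  rewrite mxE; have [->|_] := eqVneq i b; last exact: W_ge0.
  have [_|_] := eqVneq j a; first by rewrite addr_ge0.
  by have [->|_] := eqVneq j d; rewrite ?subr_ge0.
have sum_avg (V : 'M[R]_n) : \sum_j V i j = avg V (fun=> 1) i.
  by apply: eq_bigr => j _; rewrite mulr1.
by rewrite sum_avg avg_modify subrr !mulr0 addr0 -sum_avg.
Qed.

Lemma fj_solves_modify beta f x : fj_solves W beta f x ->
  fj_solves W' beta (fun i => f i - (i == b)%:R * ((1 - beta b) * w * (x a - x d))) x.
Proof.
move=> fx i; rewrite avg_modify -fx.
by have [->|_] := eqVneq i b; rewrite ?mul1r ?mul0r; ring.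
Qed.

Variables (beta : 'I_n -> R) (s r : 'I_n).
Hypotheses (W_ge0 : forall i j, 0 <= W i j) (W_sum1 : forall i, \sum_j W i j = 1)
  (W_sc : strongly_connected W) (W'_sc : strongly_connected W')
  (beta01 : forall i, 0 <= beta i <= 1) (beta_r : 0 < beta r)
  (w_range : 0 < w <= W b d).
Local Notation x := (fj_weight W beta s).
Local Notation x' := (fj_weight W' beta s).

Let W'_stochastic : row_stochastic W'.
Proof.
by apply: row_stochastic_modify => //; have /andP[/ltW -> ->] := w_range.
Qed.

Lemma fj_weight_modify_sub : fj_solves W' beta
  (fun i => (i == b)%:R * ((1 - beta b) * w * (x a - x d))) (fun i => x' i - x i).
Proof.
have [W'_ge0 W'_sum1] := W'_stochastic.
move=> i; rewrite (fj_solvesB (fj_weight_solves W'_ge0 W'_sum1 W'_sc beta01 beta_r s)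
  (fj_solves_modify (fj_weight_solves W_ge0 W_sum1 W_sc beta01 beta_r s)) i).
by rewrite subKr.
Qed.

Lemma influence_centrality_modify_sub :
  influence_centrality W' beta s - influence_centrality W beta s =
  (\sum_i (x' i - x i)) / n%:R.
Proof. by rewrite /influence_centrality -mulrBl -sumrB. Qed.

Lemma influence_centrality_modify_eq : x a = x d ->
  influence_centrality W' beta s = influence_centrality W beta s.
Proof.
move=> xad; have [W'_ge0 W'_sum1] := W'_stochastic.
apply/eqP; rewrite -subr_eq0 influence_centrality_modify_sub.
have sub0 : fj_solves W' beta (fun=> 0) (fun i => x' i - x i).
  by move=> i; rewrite fj_weight_modify_sub xad subrr !mulr0.
rewrite big1 ?mul0r // => i _.
exact: (fj_solves_inj W'_ge0 W'_sum1 W'_sc beta01 beta_r sub0 (fj_solves0 _ _) i).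
Qed.

Lemma influence_centrality_modify_lt : beta b < 1 -> x d < x a ->
  influence_centrality W beta s < influence_centrality W' beta s.
Proof.
move=> beta_b xda; have [W'_ge0 W'_sum1] := W'_stochastic.
have [w_gt0 _] := andP w_range.
have n_gt0 : (0 < n)%N := leq_ltn_trans (leq0n s) (ltn_ord s).
rewrite -subr_gt0 influence_centrality_modify_sub divr_gt0 ?ltr0n //.
apply: (fj_solves_sum_gt0 (b := b) W'_ge0 W'_sum1 W'_sc beta01 beta_r _ _
  fj_weight_modify_sub).
- move=> i; case: (i == b); rewrite ?mul0r // mul1r.
  by rewrite !mulr_ge0 ?subr_ge0 ?ltW.
- by rewrite /= eqxx mul1r !mulr_gt0 ?subr_gt0.
Qed.

End EdgeModification.

Section Paths.
Variables (R : realFieldType) (n : nat) (W : 'M[R]_n).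

Lemma simple_path_prefix u p v x : simple_path W u p v -> x \in u :: p ->
  exists p', simple_path W u p' x /\ {subset u :: p' <= u :: p}.
Proof.
move=> [path_p [last_p uniq_p]]; rewrite in_cons => /orP[/eqP->|x_p].
  by exists [::]; split=> // y; rewrite !inE => /eqP->; rewrite eqxx.
case/splitPr: x_p path_p last_p uniq_p => p1 p2 path_p _ uniq_p.
exists (rcons p1 x); split.
  split; first by move: path_p; rewrite cat_path rcons_path /= => /and3P[-> -> _].
  split; first by rewrite last_rcons.
  move: uniq_p; rewrite -cat_cons -cats1 -cat_cons !cat_uniq /=.
  by case/and3P=> -> /norP[/negbTE-> _].
move=> y; rewrite -cats1 -cat_cons -cat_cons !mem_cat !inE.
by case/orP=> [->|/eqP->]; rewrite ?eqxx ?orbT.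
Qed.

Lemma simple_path_extend u p v y : simple_path W u p v -> 0 < W y v ->
  exists p', simple_path W u p' y /\ {subset u :: p' <= y :: u :: p}.
Proof.
move=> sp W_yv; have [y_in|y_notin] := boolP (y \in u :: p).
  have [p' [sp' sub]] := simple_path_prefix sp y_in.
  by exists p'; split=> // z /sub z_in; rewrite in_cons z_in orbT.
move: sp => [path_p [last_p uniq_p]]; exists (rcons p y); split.
  split; first by rewrite rcons_path path_p last_p /edge W_yv.
  by rewrite last_rcons -rcons_cons rcons_uniq y_notin uniq_p.
move=> z; rewrite -rcons_cons mem_rcons !inE.
by case/orP=> [->|/orP[->|->]]; rewrite ?orbT.
Qed.

Lemma direct_path_refl m s : s != m -> direct_path W m s s.
Proof. by move=> sm; exists [::]; split; rewrite ?inE 1?eq_sym. Qed.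

Lemma direct_path_edge m s k i : direct_path W m s k -> 0 < W i k -> i != m ->
  direct_path W m s i.
Proof.
move=> [p [sp m_notin]] W_ik im; have [p' [sp' sub]] := simple_path_extend sp W_ik.
exists p'; split=> //; apply: contra m_notin => /sub.
by rewrite in_cons eq_sym (negbTE im).
Qed.

Lemma no_direct_path_neq m s j : ~ direct_path W m s j -> j != m -> j != s.
Proof.
move=> j_nd j_m; apply/eqP => j_s; apply: j_nd; rewrite j_s.
by apply: direct_path_refl; rewrite -j_s.
Qed.

Lemma all_paths_through_edge m i k s : all_paths_through W m i s -> i != s ->
  0 < W i k -> all_paths_through W m k s.
Proof.
move=> through_i i_s W_ik p sp; have [p' [sp' sub]] := simple_path_extend sp W_ik.
by have := sub _ (through_i _ sp'); rewrite in_cons eq_sym (negbTE i_s).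
Qed.

Lemma all_paths_through_self m s : all_paths_through W m m s -> s = m.
Proof.
move=> through_m; have : s \in [:: m] by apply: through_m.
by rewrite inE => /eqP.
Qed.

End Paths.

Section Comparison.
Variables (R : realFieldType) (n : nat) (W : 'M[R]_n).
Hypotheses (W_ge0 : forall i j, 0 <= W i j) (W_sum1 : forall i, \sum_j W i j = 1)
  (W_sc : strongly_connected W).
Implicit Types (x : 'I_n -> R).

Lemma superharmonic_ge (Q : 'I_n -> Prop) x K r : ~ Q r ->
  (forall i, Q i -> avg W x i <= x i) ->
  (forall i k, Q i -> 0 < W i k -> Q k \/ K <= x k) ->
  forall i, Q i -> K <= x i.
Proof.
move=> Q_r super out i Q_i; rewrite -subr_ge0.
apply: (min_principle W_sum1 W_ge0 (c := fun=> 1) (x := fun i => x i - K)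
  (Q := fun i => `[< Q i >]) (r := r) W_sc) => //; last exact/asboolP.
- by move=> k _; rewrite ler01 lexx.
- by move=> k /asboolP Q_k; rewrite mul1r avgB avg_cst // lerD2r super.
- move=> k k' /asboolP Q_k W_kk'; have [Q_k'|x_k'] := out k k' Q_k W_kk'.
    by left; apply/asboolP.
  by right; rewrite subr_ge0.
- by move/asboolP.
Qed.

Lemma subharmonic_le (Q : 'I_n -> Prop) x K r : ~ Q r ->
  (forall i, Q i -> x i <= avg W x i) ->
  (forall i k, Q i -> 0 < W i k -> Q k \/ x k <= K) ->
  forall i, Q i -> x i <= K.
Proof.
move=> Q_r sub out i Q_i; rewrite -lerN2.
apply: (superharmonic_ge (x := fun i => - x i) (K := - K) Q_r)
  => // [k Q_k|k k' Q_k W_kk'].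
  by rewrite avgN lerN2 sub.
by case: (out k k' Q_k W_kk') => [|x_k']; [left | right; rewrite lerN2].
Qed.

End Comparison.

Section StubbornWeight.
Variables (R : realFieldType) (n : nat) (W : 'M[R]_n) (beta : 'I_n -> R) (s : 'I_n).
Hypotheses (W_ge0 : forall i j, 0 <= W i j) (W_sum1 : forall i, \sum_j W i j = 1)
  (W_sc : strongly_connected W)
  (beta01 : forall i, 0 <= beta i <= 1) (beta_s : 0 < beta s).
Local Notation x := (fj_weight W beta s).

Let x_solves := fj_weight_solves W_ge0 W_sum1 W_sc beta01 beta_s s.

Lemma fj_weight_ge0 i : 0 <= x i.
Proof.
apply: (fj_solves_ge0 W_ge0 W_sum1 W_sc beta01 beta_s _ x_solves) => k.
by rewrite mulrn_wge0 //; have /andP[] := beta01 k.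
Qed.

Lemma fj_weight_subharmonic i : i != s -> x i <= avg W x i.
Proof.
move=> i_s; have := x_solves i; rewrite (negbTE i_s) mulr0n => /eqP.
rewrite subr_eq0 => /eqP->; rewrite ler_piMl ?sumr_ge0 // => [k _|].
  by rewrite mulr_ge0 ?fj_weight_ge0.
by have /andP[b0 _] := beta01 i; rewrite lerBlDr lerDl.
Qed.

Lemma fj_weight_le_stubborn j : x j <= x s.
Proof.
have [->//|j_s] := eqVneq j s.
apply: (subharmonic_le W_ge0 W_sum1 W_sc (Q := fun i => i != s) (r := s)) => //.
- by rewrite eqxx.
- exact: fj_weight_subharmonic.
- by move=> i k _ _; have [->|k_s] := eqVneq k s; [right | left].
Qed.

End StubbornWeight.

Definition two_stubborn (R : realFieldType) (n : nat) (beta : 'I_n -> R) s s' :=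
  [/\ s != s', 0 < beta s < 1, 0 < beta s' < 1
    & forall i, i != s -> i != s' -> beta i = 0].

Lemma two_stubbornC (R : realFieldType) (n : nat) (beta : 'I_n -> R) s s' :
  two_stubborn beta s s' -> two_stubborn beta s' s.
Proof.
case=> ss' b_s b_s' beta0; split; rewrite 1?eq_sym // => i i_s' i_s.
exact: beta0.
Qed.

Lemma two_stubborn_beta (R : realFieldType) (n : nat) (beta : 'I_n -> R) s s' :
  two_stubborn beta s s' -> forall i, 0 <= beta i < 1.
Proof.
case=> _ /andP[b_s0 b_s1] /andP[b_s'0 b_s'1] beta0 i.
have [->|i_s] := eqVneq i s; first by rewrite ltW.
have [->|i_s'] := eqVneq i s'; first by rewrite ltW.
by rewrite beta0 // lexx ltr01.
Qed.

(* [j] lies in T_1 or T_4 relative to the ordered pair (s, s'): it is s itself,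
   or an agent other than m that has no direct path from s'. *)
Definition outside_reach (R : realFieldType) (n : nat) (W : 'M[R]_n) m s s' j :=
  j = s \/ [/\ j != s, j != m & ~ direct_path W m s' j].

Section TwoStubborn.
Variables (R : realFieldType) (n : nat) (W : 'M[R]_n) (beta : 'I_n -> R).
Variables (s s' m : 'I_n).
Hypotheses (W_ge0 : forall i j, 0 <= W i j) (W_sum1 : forall i, \sum_j W i j = 1)
  (W_sc : strongly_connected W) (stubborn : two_stubborn beta s s').
Local Notation x := (fj_weight W beta s).

Let beta01 i : 0 <= beta i <= 1.
Proof. by have /andP[-> /ltW->] := two_stubborn_beta stubborn i. Qed.
Let beta_s : 0 < beta s. Proof. by case: stubborn => _ /andP[]. Qed.
Let beta_s' : 0 < beta s'. Proof. by case: stubborn => _ _ /andP[]. Qed.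

Lemma fj_weight_harmonic i : i != s -> i != s' -> x i = avg W x i.
Proof.
move=> i_s i_s'; have := fj_weight_solves W_ge0 W_sum1 W_sc beta01 beta_s s i.
case: stubborn => _ _ _ beta0; rewrite beta0 // subr0 mul1r mul0rn.
by move/eqP; rewrite subr_eq0 => /eqP.
Qed.

Lemma fj_weight_ge_other j : x s' <= x j.
Proof.
case: stubborn => ss' _ _ beta0.
rewrite !(fj_weight_compl W_ge0 W_sum1 W_sc beta01 beta_s ss' beta0) lerD2l lerN2.
exact: fj_weight_le_stubborn.
Qed.

Lemma fj_weight_stubborn_le_dominated a : a != s -> ~ direct_path W m s' a ->
  all_paths_through W m a s -> x s <= x a.
Proof.
move=> a_s a_nd a_dom.
pose Q j := [/\ j != s, all_paths_through W m j s & ~ direct_path W m s' j].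
have Q_m j : Q j -> j != m.
  case=> j_s j_dom _; apply/eqP => j_m; rewrite j_m in j_s j_dom.
  by rewrite (all_paths_through_self j_dom) eqxx in j_s.
apply: (superharmonic_ge W_ge0 W_sum1 W_sc (Q := Q) (r := m)) => //.
- by move/Q_m; rewrite eqxx.
- move=> i Q_i; have [i_s _ i_nd] := Q_i.
  by rewrite (fj_weight_harmonic i_s (no_direct_path_neq i_nd (Q_m i Q_i))).
- move=> i k Q_i W_ik; have [i_s i_dom i_nd] := Q_i.
  have [->|k_s] := eqVneq k s; [by right | left].
  split=> //; first exact: all_paths_through_edge i_dom i_s W_ik.
  by move=> k_d; apply: i_nd; apply: direct_path_edge k_d W_ik (Q_m i Q_i).
Qed.

Lemma fj_weight_ge_communicator a : a != m -> ~ direct_path W m s a ->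
  ~ direct_path W m s' a -> x m <= x a.
Proof.
move=> a_m a_nd a_nd'.
pose Q j := [/\ j != m, ~ direct_path W m s j & ~ direct_path W m s' j].
apply: (superharmonic_ge W_ge0 W_sum1 W_sc (Q := Q) (r := m)) => //.
- by case; rewrite eqxx.
- move=> i [i_m i_nd i_nd'].
  have [i_s i_s'] := (no_direct_path_neq i_nd i_m, no_direct_path_neq i_nd' i_m).
  by rewrite (fj_weight_harmonic i_s i_s').
- move=> i k [i_m i_nd i_nd'] W_ik; have [->|k_m] := eqVneq k m; [by right | left].
  by split=> // k_d; [apply: i_nd | apply: i_nd']; apply: direct_path_edge k_d W_ik i_m.
Qed.

Lemma fj_weight_le_communicator d : d != m -> ~ direct_path W m s d -> x d <= x m.
Proof.
move=> d_m d_nd.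
apply: (subharmonic_le W_ge0 W_sum1 W_sc (Q := fun j => j != m /\ ~ direct_path W m s j)
  (r := m)) => //.
- by case; rewrite eqxx.
- move=> i [i_m i_nd]; have i_s := no_direct_path_neq i_nd i_m.
  exact: fj_weight_subharmonic W_ge0 W_sum1 W_sc beta01 beta_s i i_s.
- move=> i k [i_m i_nd] W_ik; have [->|k_m] := eqVneq k m; [by right | left].
  by split=> // k_d; apply: i_nd; apply: direct_path_edge k_d W_ik i_m.
Qed.

Lemma fj_weight_le_dominated a : outside_reach W m s s' a ->
  all_paths_through W m a s -> forall d, x d <= x a.
Proof.
move=> a_out a_dom d.
have d_le := fj_weight_le_stubborn W_ge0 W_sum1 W_sc beta01 beta_s d.
case: a_out => [->//|[a_s _ a_nd]].
exact: le_trans d_le (fj_weight_stubborn_le_dominated a_s a_nd a_dom).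
Qed.

Lemma fj_weight_le_unreached a d : a != m -> ~ direct_path W m s a ->
  ~ direct_path W m s' a -> outside_reach W m s' s d -> x d <= x a.
Proof.
move=> a_m a_nd a_nd' [->|[_ d_m d_nd]]; first exact: fj_weight_ge_other.
apply: le_trans (fj_weight_le_communicator d_m d_nd) _.
exact: fj_weight_ge_communicator.
Qed.

Lemma influence_centrality_modify_gt a b d w : a != d -> 0 < w <= W b d ->
  strongly_connected (modify W a b d w) ->
  influence_centrality (modify W a b d w) beta s != influence_centrality W beta s \/
  influence_centrality (modify W a b d w) beta s' != influence_centrality W beta s' ->
  x d <= x a ->
  influence_centrality W beta s < influence_centrality (modify W a b d w) beta s.
Proof.
move=> ad w_range W'_sc nonredundant x_da.
have [ss' _ _ beta0] := stubborn.
have s's : s' != s by rewrite eq_sym.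
have x_compl := fj_weight_compl W_ge0 W_sum1 W_sc beta01 beta_s' s's
  (fun i i_s' i_s => beta0 i i_s i_s').
have IC_eq := influence_centrality_modify_eq ad W_ge0 W_sum1 W_sc W'_sc beta01.
have x_ad : x a != x d.
  apply/eqP => x_ad; case: nonredundant => /eqP; apply.
    exact: (IC_eq _ _ beta_s w_range x_ad).
  by apply: (IC_eq _ _ beta_s' w_range); rewrite !x_compl x_ad.
apply: (influence_centrality_modify_lt ad W_ge0 W_sum1 W_sc W'_sc beta01 beta_s w_range).
  by have /andP[] := two_stubborn_beta stubborn b.
by rewrite lt_neqAle eq_sym x_ad x_da.
Qed.

End TwoStubborn.

Section Classes.
Variables (R : realFieldType) (n : nat) (W : 'M[R]_n) (m s1 s2 : 'I_n).

Lemma inT1_outside j : inT W m s1 s2 1 j -> outside_reach W m s1 s2 j.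
Proof.
rewrite /inT; have [->|j_s1] := eqVneq j s1; first by left.
have [_ [T3 T2]|j_s2] := eqVneq j s2.
  by case: (pselect (direct_path W m s1 s2)) => [/T3|/T2].
by have [//|j_m [_ j_nd]] := eqVneq j m; right.
Qed.

Lemma inT2_outside j : inT W m s1 s2 2 j -> outside_reach W m s2 s1 j.
Proof.
rewrite /inT; have [//|j_s1] := eqVneq j s1.
have [-> _|j_s2] := eqVneq j s2; first by left.
by have [//|j_m [j_nd _]] := eqVneq j m; right.
Qed.

Lemma inT4E j : inT W m s1 s2 4 j ->
  [/\ j != m, ~ direct_path W m s1 j & ~ direct_path W m s2 j].
Proof.
rewrite /inT; have [//|j_s1] := eqVneq j s1.
have [_ [T3 T2]|j_s2] := eqVneq j s2.
  by case: (pselect (direct_path W m s1 s2)) => [/T3|/T2].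
by have [//|j_m []] := eqVneq j m.
Qed.

End Classes.

Theorem theorem2 (R : realFieldType) (n : nat) (W : 'M[R]_n)
  (beta : 'I_n -> R) (s1 s2 m a b d : 'I_n) (w : R) :
  row_stochastic W ->
  type_C1 W ->
  s1 != s2 ->
  0 < beta s1 < 1 -> 0 < beta s2 < 1 ->
  (forall i, i != s1 -> i != s2 -> beta i = 0) ->
  global_communicator W m ->
  (* edge modification (a,b,d) *)
  a != b -> b != d -> a != d ->
  0 < W b d -> 0 < w < W b d ->
  (* permissible *)
  type_C1 (modify W a b d w) ->
  (* non-redundant *)
  (influence_centrality (modify W a b d w) beta s1 != influence_centrality W beta s1
   \/ influence_centrality (modify W a b d w) beta s2 != influence_centrality W beta s2) ->
  ((((inT W m s1 s2 1 a /\ all_paths_through W m a s1)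
      /\ ~ (inT W m s1 s2 1 d /\ all_paths_through W m d s1))
    \/ (inT W m s1 s2 4 a /\ inT W m s1 s2 2 d)) ->
   influence_centrality W beta s1 < influence_centrality (modify W a b d w) beta s1)
  /\
  ((((inT W m s1 s2 2 a /\ all_paths_through W m a s2)
      /\ ~ (inT W m s1 s2 2 d /\ all_paths_through W m d s2))
    \/ (inT W m s1 s2 4 a /\ inT W m s1 s2 1 d)) ->
   influence_centrality W beta s2 < influence_centrality (modify W a b d w) beta s2).
Proof.
move=> [W_ge0 W_sum1] [W_sc _] s12 beta_s1 beta_s2 beta0 _ _ _ ad _
  /andP[w_gt0 /ltW w_le] [W'_sc _] nonredundant.
have w_range : 0 < w <= W b d by rewrite w_gt0.
have st12 : two_stubborn beta s1 s2 by [].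
have st21 := two_stubbornC st12.
split=> [C_s1|C_s2].
  apply: (influence_centrality_modify_gt W_ge0 W_sum1 W_sc st12 ad w_range W'_sc
    nonredundant).
  case: C_s1 => [[[a_T1 a_dom] _] | [/inT4E[a_m a_nd1 a_nd2] d_T2]].
    exact: (fj_weight_le_dominated W_ge0 W_sum1 W_sc st12 (inT1_outside a_T1) a_dom).
  exact: (fj_weight_le_unreached W_ge0 W_sum1 W_sc st12 a_m a_nd1 a_nd2
    (inT2_outside d_T2)).
apply: (influence_centrality_modify_gt W_ge0 W_sum1 W_sc st21 ad w_range W'_sc).
  by case: nonredundant; [right | left].
case: C_s2 => [[[a_T2 a_dom] _] | [/inT4E[a_m a_nd1 a_nd2] d_T1]].
  exact: (fj_weight_le_dominated W_ge0 W_sum1 W_sc st21 (inT2_outside a_T2) a_dom).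
exact: (fj_weight_le_unreached W_ge0 W_sum1 W_sc st21 a_m a_nd2 a_nd1
  (inT1_outside d_T1)).
Qed.
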